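(* Let $v\ge2$, $n\ge1$, $\epsilon>0$. Let $(Q,\hat P_n)$ and $(Q',\hat P_n')$ be block design schemes with parameters $(v,b,r,k,\lambda,\epsilon)$ and $(v,b',r',k',\lambda',\epsilon)$, respectively. Then the two schemes are marginally equivalent if and only if $k=k'$.
   Context: $\mathcal{X}=\{1,\dots,v\}$; $\Delta_v$ is the set of probability vectors on $\mathcal{X}$. For an incidence structure $(\mathcal{X},\mathcal{Y},\mathcal{I})$ ($\mathcal{I}\subset\mathcal{X}\times\mathcal{Y}$) write $\mathcal{I}_x=\{y:(x,y)\in\mathcal{I}\}$, $\mathcal{I}^y=\{x:(x,y)\in\mathcal{I}\}$. For integers $v>k>0$, $b>r>\lambda\ge0$, a $(v,b,r,k,\lambda)$-block design is an incidence structure with $|\mathcal{X}|=v$, $|\mathcal{Y}|=b$, $|\mathcal{I}_x|=r$ for all $x$, $|\mathcal{I}^y|=k$ for all $y$, $|\mathcal{I}_x\cap\mathcal{I}_{x'}|=\lambda$ for all $x\neq x'$. A block design scheme with parameters $(v,b,r,k,\lambda,\epsilon)$ consists of a $(v,b,r,k,\lambda)$-block design, the mechanism $Q(y|x)=\alpha e^\epsilon$ if $(x,y)\in\mathcal{I}$ and $\alpha$ otherwise, with $\alpha=1/(re^\epsilon+b-r)$, and the estimator $\hat P_{n,x}(Y_1,\dots,Y_n)=\frac{1}{(r-\lambda)(e^\epsilon-1)}\left(\frac{N_x}{n\alpha}-(\lambda e^\epsilon+r-\lambda)\right)$, $N_x=\sum_{i=1}^n\mathbb{1}(Y_i\in\mathcal{I}_x)$.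 Two schemes $(Q,\hat P_n)$, $(Q',\hat P_n')$ (mechanisms with inputs in $\mathcal{X}$) are marginally equivalent if, whenever $X_1,\dots,X_n$ are i.i.d. $\sim P$ and $Y_i\sim Q(\cdot|X_i)$, $Y_i'\sim Q'(\cdot|X_i)$, one has $\hat P_{n,x}(Y_1,\dots,Y_n)\overset{d}{=}\hat P'_{n,x}(Y_1',\dots,Y_n')$ for every $x\in\mathcal{X}$ and every $P\in\Delta_v$. *)

From mathcomp Require Import all_boot all_order all_algebra.
From mathcomp Require Import reals.
From mathcomp.analysis Require Import sequences exp.
Set Implicit Arguments. Unset Strict Implicit. Unset Printing Implicit Defensive.
Import Order.TTheory GRing.Theory Num.Theory.
Local Open Scope ring_scope.

(* X = 'I_v (element i stands for i+1), Y = 'I_b.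
   An incidence structure is a boolean relation inc : 'I_v -> 'I_b -> bool. *)

Definition is_block_design (v b r k lam : nat) (inc : 'I_v -> 'I_b -> bool) : Prop :=
  [/\ (0 < k < v)%N, (lam < r < b)%N,
      (forall x : 'I_v, #|[set y | inc x y]| = r),
      (forall y : 'I_b, #|[set x | inc x y]| = k) &
      (forall x x' : 'I_v, x != x' -> #|[set y | inc x y && inc x' y]| = lam)].

Definition is_prob_vec (R : realType) (v : nat) (P : 'I_v -> R) : Prop :=
  (forall x, 0 <= P x) /\ \sum_(x < v) P x = 1.

Section BlockScheme.
Variables (R : realType) (v b r lam n : nat) (eps : R) (inc : 'I_v -> 'I_b -> bool).

Definition bd_alpha : R := 1 / (r%:R * expR eps + b%:R - r%:R).

Definition bd_Q (x : 'I_v) (y : 'I_b) : R :=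
  if inc x y then bd_alpha * expR eps else bd_alpha.

Definition bd_N (x : 'I_v) (ys : {ffun 'I_n -> 'I_b}) : nat :=
  #|[set i : 'I_n | inc x (ys i)]|.

Definition bd_est (x : 'I_v) (ys : {ffun 'I_n -> 'I_b}) : R :=
  1 / ((r%:R - lam%:R) * (expR eps - 1)) *
  ((bd_N x ys)%:R / (n%:R * bd_alpha) - (lam%:R * expR eps + r%:R - lam%:R)).

End BlockScheme.

(* Law of the estimator: Pr[ est x (Y_1..Y_n) = t ] where X_1..X_n i.i.d. ~ P
   and, independently across i, Y_i ~ Q(.|X_i). *)
Definition est_law (R : realType) (v n : nat) (Y : finType)
    (Q : 'I_v -> Y -> R) (est : 'I_v -> {ffun 'I_n -> Y} -> R)
    (P : 'I_v -> R) (x : 'I_v) (t : R) : R :=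
  \sum_(xs : {ffun 'I_n -> 'I_v})
    \sum_(ys : {ffun 'I_n -> Y} | est x ys == t)
      \prod_(i < n) (P (xs i) * Q (xs i) (ys i)).

(* marginal equivalence: equality in distribution (of these finitely supported
   real random variables, i.e. equality of their probability mass functions)
   for every x and every P in Delta_v *)
Definition marginally_equivalent (R : realType) (v n : nat) (Y Y' : finType)
    (Q : 'I_v -> Y -> R) (est : 'I_v -> {ffun 'I_n -> Y} -> R)
    (Q' : 'I_v -> Y' -> R) (est' : 'I_v -> {ffun 'I_n -> Y'} -> R) : Prop :=
  forall P : 'I_v -> R, is_prob_vec P ->
  forall (x : 'I_v) (t : R), est_law Q est P x t = est_law Q' est' P x t.

(* Since X_1, ..., X_n are i.i.d., so are Y_1, ..., Y_n, and N_x is binomial with parameter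
   Pr[Y in I_x] = q_o + P(x) (q_s - q_o), where q_s = Q(I_x | x) and q_o = Q(I_x | x') for x' <> x.
   The counting identities b k = v r and r + (v - 1) lam = r k show that q_s and q_o depend on the
   design only through k (given v and eps), while the estimator is the increasing affine function
   (N_x / n - q_o) / (q_s - q_o) of N_x; so k = k' gives equal laws.  Conversely, for the point
   mass P at x the largest atom of the law comes from N_x = n and has mass q_s^n, so equal laws
   force equal q_s = k e^eps / (k (e^eps - 1) + v), and this determines k. *)

From mathcomp Require Import all_boot all_order all_algebra.
From mathcomp Require Import reals.
From mathcomp.analysis Require Import sequences exp.
From mathcomp Require Import ring lra.
Import Order.TTheory GRing.Theory Num.Theory.
Local Open Scope ring_scope.
Set Implicit Arguments. Unset Strict Implicit. Unset Printing Implicit Defensive.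

Lemma card_set_sum (T : finType) (P : pred T) : #|[set x | P x]| = (\sum_x P x)%N.
Proof. by rewrite -sum1dep_card big_mkcond. Qed.

Section FfunProducts.
Variables (R : comPzRingType) (Y : finType) (A : pred Y) (w : Y -> R).

Lemma big_ffun_preimset (I : finType) (S : {set I}) :
  \sum_(f : {ffun I -> Y} | [set i | A (f i)] == S) \prod_i w (f i)
  = (\sum_(y | A y) w y) ^+ #|S| * (\sum_(y | ~~ A y) w y) ^+ #|~: S|.
Proof.
transitivity (\sum_(f in family (fun i y => A y == (i \in S))) \prod_i w (f i)).
  apply: eq_bigl => f; apply/eqP/familyP => [fS i | fS].
    by rewrite -fS inE; exact: eqxx.
  by apply/setP => i; rewrite inE; apply/eqP; have := fS i; rewrite unfold_in.
rewrite -(bigA_distr_big_dep _ (fun _ y => w y)) (bigID (mem S)) /=.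
rewrite (eq_bigr (fun _ => \sum_(y | A y) w y)) => [|i iS]; last first.
  by apply: eq_bigl => y; rewrite iS eqb_id.
rewrite [X in _ * X](eq_bigr (fun _ => \sum_(y | ~~ A y) w y)) => [|i /negbTE iS]; last first.
  by apply: eq_bigl => y; rewrite iS eqbF_neg.
rewrite !prodr_const; congr (_ * _ ^+ _); apply: eq_card => i; by rewrite !inE.
Qed.

Lemma big_ffun_card_preim (n j : nat) :
  \sum_(f : {ffun 'I_n -> Y} | #|[set i | A (f i)]| == j) \prod_i w (f i)
  = 'C(n, j)%:R * (\sum_(y | A y) w y) ^+ j * (\sum_(y | ~~ A y) w y) ^+ (n - j).
Proof.
set a := \sum_(y | A y) w y; set c := \sum_(y | ~~ A y) w y.
transitivity (\sum_(S : {set 'I_n} | #|S| == j) a ^+ j * c ^+ (n - j)).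
  rewrite (partition_big (fun f : {ffun 'I_n -> Y} => [set i | A (f i)])
    (fun S => #|S| == j)) //=; apply: eq_bigr => S /eqP <-.
  rewrite -[n in (n - _)%N]card_ord -(cardsC S) addKn -big_ffun_preimset.
  by apply: eq_bigl => f; rewrite andb_idl // => /eqP ->.
by rewrite -big_set sumr_const (card_draws 'I_n j) card_ord mulr_natl mulrnAl.
Qed.

End FfunProducts.

Definition binomial_image (R : pzRingType) (n : nat) (p : R) (g : nat -> R) (t : R) : R :=
  \sum_(j < n.+1 | g j == t) 'C(n, j)%:R * p ^+ j * (1 - p) ^+ (n - j).

Lemma binomial_image_count (R : comPzRingType) (Y : finType) (n : nat) (A : pred Y)
    (w : Y -> R) (g : nat -> R) (t : R) :
  \sum_y w y = 1 ->
  \sum_(f : {ffun 'I_n -> Y} | g #|[set i | A (f i)]| == t) \prod_i w (f i)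
  = binomial_image n (\sum_(y | A y) w y) g t.
Proof.
move=> w1; have cardA (f : {ffun 'I_n -> Y}) : (#|[set i | A (f i)]| < n.+1)%N.
  by rewrite ltnS (leq_trans (max_card _)) ?card_ord.
have sumNA : \sum_(y | ~~ A y) w y = 1 - \sum_(y | A y) w y.
  by rewrite -w1 (bigID A predT) /= addrC addrK.
rewrite /binomial_image (partition_big
  (fun f : {ffun 'I_n -> Y} => inord #|[set i | A (f i)]| : 'I_n.+1)
  (fun j : 'I_n.+1 => g j == t)) /=; last by move=> f; rewrite inordK.
apply: eq_bigr => j /eqP gj; rewrite -sumNA -big_ffun_card_preim; apply: eq_bigl => f.
apply/andP/eqP => [[_ /eqP <-] | cardj]; first by rewrite inordK.
by rewrite cardj gj inord_val.
Qed.

Section BinomialImageSupport.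
Variables (R : realDomainType) (n : nat).

Lemma binomial_image_top (p : R) (g : nat -> R) :
  {homo g : i j / (i < j)%N >-> i < j} -> binomial_image n p g (g n) = p ^+ n.
Proof.
move=> g_incr; rewrite /binomial_image (eq_bigl (pred1 ord_max)); last first.
  move=> j /=; rewrite -val_eqE /=; have := ltn_ord j.
  rewrite ltnS leq_eqVlt => /orP[/eqP -> | jn]; first by rewrite !eqxx.
  by rewrite (ltn_eqF jn) lt_eqF ?g_incr.
by rewrite big_pred1_eq /= binn subnn mul1r mulr1.
Qed.

Lemma binomial_image_support (p : R) (g : nat -> R) (t : R) :
  {homo g : i j / (i < j)%N >-> i < j} -> binomial_image n p g t != 0 -> t <= g n.
Proof.
move=> g_incr; rewrite /binomial_image.
case: (pickP (fun j : 'I_n.+1 => g j == t)) => [j /eqP <- _ | none]; last first.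
  by rewrite big_pred0 ?eqxx.
have := ltn_ord j; rewrite ltnS leq_eqVlt => /orP[/eqP -> | /g_incr /ltW //].
by rewrite lexx.
Qed.

Lemma binomial_image_top_le (p1 p2 : R) (g1 g2 : nat -> R) : 0 < p1 ->
  {homo g1 : i j / (i < j)%N >-> i < j} -> {homo g2 : i j / (i < j)%N >-> i < j} ->
  (forall t, binomial_image n p1 g1 t = binomial_image n p2 g2 t) -> g1 n <= g2 n.
Proof.
move=> p1_gt0 g1_incr g2_incr eq12; apply: (binomial_image_support (p := p2) g2_incr).
by rewrite -eq12 binomial_image_top // expf_neq0 // gt_eqF.
Qed.

Lemma eq_binomial_image_prob (p1 p2 : R) (g1 g2 : nat -> R) :
  (0 < n)%N -> 0 < p1 -> 0 < p2 ->
  {homo g1 : i j / (i < j)%N >-> i < j} -> {homo g2 : i j / (i < j)%N >-> i < j} ->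
  (forall t, binomial_image n p1 g1 t = binomial_image n p2 g2 t) -> p1 = p2.
Proof.
move=> n_gt0 p1_gt0 p2_gt0 g1_incr g2_incr eq12.
have g_top : g1 n = g2 n.
  apply/le_anti/andP; split; first exact: (binomial_image_top_le (p1 := p1) (p2 := p2)).
  by apply: (binomial_image_top_le (p1 := p2) (p2 := p1)) => // t; rewrite eq12.
have /eqP := eq12 (g1 n); rewrite {2}g_top !binomial_image_top //.
by rewrite eqrXn2 ?ltW // => /eqP.
Qed.

End BinomialImageSupport.

Lemma est_law_marginal (R : realType) (v n : nat) (Y : finType) (Q : 'I_v -> Y -> R)
    (est : 'I_v -> {ffun 'I_n -> Y} -> R) (P : 'I_v -> R) (x : 'I_v) (t : R) :
  est_law Q est P x t
  = \sum_(ys : {ffun 'I_n -> Y} | est x ys == t) \prod_i \sum_(x' < v) P x' * Q x' (ys i).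
Proof. by rewrite /est_law exchange_big; apply: eq_bigr => ys _; rewrite bigA_distr_bigA. Qed.

Section BlockDesignCounting.
Variables (v b r k lam : nat) (inc : 'I_v -> 'I_b -> bool).
Hypothesis design : is_block_design r k lam inc.

Lemma block_design_count_incidences : (b * k = v * r)%N.
Proof.
have [_ _ row_card col_card _] := design.
have : (\sum_y #|[set x | inc x y]| = \sum_x #|[set y | inc x y]|)%N.
  rewrite (eq_bigr _ (fun y _ => card_set_sum _)) exchange_big /=.
  by apply: eq_bigr => x _; rewrite card_set_sum.
rewrite (eq_bigr _ (fun y _ => col_card y)) (eq_bigr _ (fun x _ => row_card x)).
by rewrite !sum_nat_const !card_ord.
Qed.

Lemma block_design_count_pairs : (0 < v)%N -> (r + v.-1 * lam = r * k)%N.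
Proof.
move=> v_gt0; pose x0 := Ordinal v_gt0.
have [_ _ row_card col_card pair_card] := design.
transitivity (\sum_x #|[set y | inc x0 y && inc x y]|)%N.
  rewrite (bigD1 x0) //= (eq_bigr (fun _ => lam)) => [|x /negPf x0x]; last first.
    by rewrite pair_card // eq_sym x0x.
  rewrite sum_nat_const cardC1 card_ord mulnC.
  by congr (_ + _)%N; rewrite -(row_card x0); apply: eq_card => y; rewrite !inE andbb.
under eq_bigr do rewrite card_set_sum.
rewrite exchange_big /= -(row_card x0) card_set_sum big_distrl /=.
apply: eq_bigr => y _; rewrite -(col_card y) card_set_sum big_distrr /=.
by apply: eq_bigr => x _; rewrite mulnb.
Qed.

End BlockDesignCounting.

Lemma sum_indicator (R : pzSemiRingType) (T : finType) (P : pred T) :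
  \sum_y ((P y)%:R : R) = #|[set y | P y]|%:R.
Proof. by rewrite card_set_sum natr_sum. Qed.

(* For [e = exp eps]: the probabilities Q(I_x | x) and Q(I_x | x'), x' <> x, that the released
   block contains the input, resp. another fixed point (see [bd_Q_block]). *)
Definition bd_q_self (R : fieldType) (e v k : R) : R := k * e / (k * (e - 1) + v).

Definition bd_q_other (R : fieldType) (e v k : R) : R :=
  k * (v - 1 + (k - 1) * (e - 1)) / ((v - 1) * (k * (e - 1) + v)).

Section BdQSelf.
Variables (R : realFieldType) (e v : R).
Hypotheses (e_gt1 : 1 < e) (v_gt0 : 0 < v).

Lemma bd_q_self_den_gt0 (k : R) : 0 < k -> 0 < k * (e - 1) + v.
Proof. by move=> k_gt0; rewrite ltr_wpDl ?mulr_ge0 ?ltW ?subr_gt0. Qed.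

Lemma bd_q_self_gt0 (k : R) : 0 < k -> 0 < bd_q_self e v k.
Proof.
move=> k_gt0; rewrite divr_gt0 ?bd_q_self_den_gt0 // mulr_gt0 //.
exact: lt_trans ltr01 e_gt1.
Qed.

Lemma bd_q_self_inj : {in Num.pos &, injective (bd_q_self e v)}.
Proof.
move=> k k' k_gt0 k'_gt0; rewrite !posrE in k_gt0 k'_gt0.
rewrite /bd_q_self => /eqP.
rewrite eqr_div ?lt0r_neq0 ?bd_q_self_den_gt0 // => /eqP eq_cross.
have : k * (e * v) = k' * (e * v) by lra.
by move/mulIf; apply; rewrite mulf_neq0 ?lt0r_neq0 // (lt_trans ltr01).
Qed.

End BdQSelf.

Definition rescaled_count (R : fieldType) (n : nat) (a d : R) (j : nat) : R :=
  (j%:R / n%:R - a) / d.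

Lemma rescaled_count_incr (R : realFieldType) (n : nat) (a d : R) :
  (0 < n)%N -> 0 < d -> {homo rescaled_count n a d : i j / (i < j)%N >-> i < j}.
Proof.
move=> n_gt0 d_gt0 i j ij; rewrite /rescaled_count ltr_pM2r ?invr_gt0 // ltrD2r.
by rewrite ltr_pM2r ?invr_gt0 ?ltr0n // ltr_nat.
Qed.

Lemma is_prob_vec_dirac (R : realType) (v : nat) (x : 'I_v) :
  is_prob_vec (fun y => (y == x)%:R : R).
Proof.
split=> [y | ]; first by rewrite ler0n.
by rewrite (bigD1 x) //= eqxx big1 ?addr0 // => y /negPf ->.
Qed.

Section BlockDesignScheme.
Variables (R : realType) (v b r k lam : nat) (eps : R) (inc : 'I_v -> 'I_b -> bool).
Hypotheses (design : is_block_design r k lam inc) (v_ge2 : (2 <= v)%N) (eps_gt0 : 0 < eps).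

Local Notation e := (expR eps).
Local Notation alpha := (bd_alpha b r eps).

Lemma bd_alpha_den_gt0 : 0 < r%:R * e + b%:R - r%:R.
Proof.
have [_ /andP[_ r_lt_b] _ _ _] := design.
have e_gt1 : 1 < e by rewrite expR_gt1.
have : r%:R < b%:R :> R by rewrite ltr_nat.
have : 0 <= r%:R :> R by rewrite ler0n.
nra.
Qed.

Lemma bd_alpha_gt0 : 0 < alpha.
Proof. by rewrite /bd_alpha div1r invr_gt0 bd_alpha_den_gt0. Qed.

Lemma bd_alpha_self : alpha * (r%:R + (e - 1) * r%:R) = bd_q_self e v%:R k%:R.
Proof.
have [/andP[k_gt0 _] _ _ _ _] := design.
have e_gt1 : 1 < e by rewrite expR_gt1.
have bk : b%:R * k%:R = v%:R * r%:R :> R.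
  by rewrite -!natrM (block_design_count_incidences design).
have : 0 < k%:R * (e - 1) + v%:R :> R.
  by rewrite ltr_wpDl ?mulr_ge0 ?ler0n ?subr_ge0 ?ltW // ltr0n (ltn_trans _ v_ge2).
rewrite /bd_q_self /bd_alpha div1r [_^-1 * _]mulrC => den_gt0; apply/eqP.
rewrite eqr_div ?lt0r_neq0 ?bd_alpha_den_gt0 //; apply/eqP.
have := congr1 ( *%R e) bk; lra.
Qed.

Lemma bd_alpha_other : alpha * (r%:R + (e - 1) * lam%:R) = bd_q_other e v%:R k%:R.
Proof.
have [/andP[k_gt0 _] _ _ _ _] := design.
have e_gt1 : 1 < e by rewrite expR_gt1.
have bk : b%:R * k%:R = v%:R * r%:R :> R.
  by rewrite -!natrM (block_design_count_incidences design).
have pairs : r%:R + (v%:R - 1) * lam%:R = r%:R * k%:R :> R.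
  have := congr1 (GRing.natmul (1 : R)) (block_design_count_pairs design (ltnW v_ge2)).
  by rewrite natrD !natrM -subn1 natrB // (ltnW v_ge2).
have v_gt1 : 1 < v%:R :> R by rewrite ltr1n.
have : 0 < (v%:R - 1) * (k%:R * (e - 1) + v%:R) :> R.
  by rewrite mulr_gt0 ?subr_gt0 // ltr_wpDl ?mulr_ge0 ?ler0n ?subr_ge0 ?ltW // (lt_trans ltr01).
rewrite /bd_q_other /bd_alpha div1r [_^-1 * _]mulrC => den_gt0; apply/eqP.
rewrite eqr_div ?lt0r_neq0 ?bd_alpha_den_gt0 //; apply/eqP.
have := congr1 ( *%R ((e - 1) * (k%:R * (e - 1) + v%:R))) pairs.
have := congr1 ( *%R (v%:R - 1 + (k%:R - 1) * (e - 1))) bk.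
lra.
Qed.

Lemma bd_Q_block (x x' : 'I_v) :
  \sum_(y | inc x y) bd_Q r eps inc x' y
  = if x' == x then bd_q_self e v%:R k%:R else bd_q_other e v%:R k%:R.
Proof.
have [_ _ row_card _ pair_card] := design.
transitivity (alpha * (r%:R + (e - 1) * #|[set y | inc x y && inc x' y]|%:R)).
  rewrite big_mkcond /= (eq_bigr (fun y =>
    alpha * ((inc x y)%:R + (e - 1) * (inc x y && inc x' y)%:R))) => [|y _].
    by rewrite -mulr_sumr big_split -mulr_sumr /= !sum_indicator row_card.
  by rewrite /bd_Q; case: (inc x y); case: (inc x' y) => /=; ring.
case: eqVneq => [->|x'x]; last by rewrite pair_card 1?eq_sym // bd_alpha_other.
rewrite (_ : [set y | inc x y && inc x y] = [set y | inc x y]) ?row_card ?bd_alpha_self //.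
by apply/setP => y; rewrite !inE andbb.
Qed.

Lemma bd_Q_sum (x' : 'I_v) : \sum_y bd_Q r eps inc x' y = 1.
Proof.
have [_ _ row_card _ _] := design.
transitivity (alpha * (b%:R + (e - 1) * r%:R)).
  rewrite (eq_bigr (fun y => alpha * (1 + (e - 1) * (inc x' y)%:R))) => [|y _].
    rewrite -mulr_sumr big_split /= -mulr_sumr sum_indicator row_card.
    by rewrite sumr_const card_ord.
  by rewrite /bd_Q; case: (inc x' y) => /=; ring.
have := bd_alpha_den_gt0; rewrite /bd_alpha => /lt0r_neq0 den_neq0.
by field.
Qed.

Lemma bd_q_gap_gt0 : 0 < bd_q_self e v%:R k%:R - bd_q_other e v%:R k%:R.
Proof.
have [_ /andP[lam_lt_r _] _ _ _] := design.
rewrite subr_gt0 -bd_alpha_self -bd_alpha_other ltr_pM2l ?bd_alpha_gt0 // ltrD2l.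
by rewrite ltr_pM2l ?subr_gt0 ?expR_gt1 // ltr_nat.
Qed.

Lemma bd_est_rescaled (n : nat) (x : 'I_v) (ys : {ffun 'I_n -> 'I_b}) : (0 < n)%N ->
  bd_est r lam eps inc x ys = rescaled_count n (bd_q_other e v%:R k%:R)
    (bd_q_self e v%:R k%:R - bd_q_other e v%:R k%:R) (bd_N inc x ys).
Proof.
move=> n_gt0; have [_ /andP[lam_lt_r _] _ _ _] := design.
have /lt0r_neq0 := bd_q_gap_gt0.
rewrite /bd_est /rescaled_count -bd_alpha_self -bd_alpha_other => gap_neq0.
field; rewrite gap_neq0 pnatr_eq0 -lt0n n_gt0 (lt0r_neq0 bd_alpha_gt0).
by rewrite !subr_eq0 gt_eqF ?expR_gt1 // eqr_nat gtn_eqF.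
Qed.

Lemma bd_est_law (n : nat) (P : 'I_v -> R) (x : 'I_v) (t : R) :
  (0 < n)%N -> is_prob_vec P ->
  est_law (bd_Q r eps inc) (bd_est (n := n) r lam eps inc) P x t
  = binomial_image n
      (bd_q_other e v%:R k%:R + P x * (bd_q_self e v%:R k%:R - bd_q_other e v%:R k%:R))
      (rescaled_count n (bd_q_other e v%:R k%:R)
         (bd_q_self e v%:R k%:R - bd_q_other e v%:R k%:R)) t.
Proof.
move=> n_gt0 [_ P_sum1]; rewrite est_law_marginal.
under eq_bigl do rewrite bd_est_rescaled // /bd_N.
rewrite (binomial_image_count n (inc x)
  (w := fun y => \sum_(x' < v) P x' * bd_Q r eps inc x' y)); last first.
  rewrite exchange_big /= -P_sum1; apply: eq_bigr => x' _.
  by rewrite -mulr_sumr bd_Q_sum mulr1.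
congr binomial_image; rewrite exchange_big /=.
under eq_bigr do rewrite -mulr_sumr bd_Q_block.
set qs := bd_q_self _ _ _; set qo := bd_q_other _ _ _.
have P_other : \sum_(x' | x' != x) P x' = 1 - P x.
  by rewrite -P_sum1 [in RHS](bigD1 x) //= [_ + _ - _]addrC addKr.
rewrite (bigD1 x) //= eqxx (eq_bigr (fun x' => P x' * qo)) => [|x' /negPf -> //].
by rewrite -mulr_suml P_other; ring.
Qed.

Lemma bd_est_law_dirac (n : nat) (x : 'I_v) (t : R) : (0 < n)%N ->
  est_law (bd_Q r eps inc) (bd_est (n := n) r lam eps inc) (fun y => (y == x)%:R) x t
  = binomial_image n (bd_q_self e v%:R k%:R)
      (rescaled_count n (bd_q_other e v%:R k%:R)
         (bd_q_self e v%:R k%:R - bd_q_other e v%:R k%:R)) t.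
Proof.
move=> n_gt0; rewrite bd_est_law ?eqxx ?mul1r ?subrKC //.
exact: is_prob_vec_dirac.
Qed.

Lemma bd_rescaled_count_incr (n : nat) : (0 < n)%N ->
  {homo rescaled_count n (bd_q_other e v%:R k%:R)
     (bd_q_self e v%:R k%:R - bd_q_other e v%:R k%:R) : i j / (i < j)%N >-> i < j}.
Proof. by move=> n_gt0; apply: rescaled_count_incr; rewrite ?bd_q_gap_gt0. Qed.

End BlockDesignScheme.

Theorem theorem2 (R : realType) (v n : nat) (eps : R)
    (b r k lam : nat) (inc : 'I_v -> 'I_b -> bool)
    (b' r' k' lam' : nat) (inc' : 'I_v -> 'I_b' -> bool) :
  (2 <= v)%N -> (1 <= n)%N -> 0 < eps ->
  @is_block_design v b r k lam inc ->
  @is_block_design v b' r' k' lam' inc' ->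
  (marginally_equivalent
     (@bd_Q R v b r eps inc) (@bd_est R v b r lam n eps inc)
     (@bd_Q R v b' r' eps inc') (@bd_est R v b' r' lam' n eps inc')
   <-> k = k').
Proof.
move=> v_ge2 n_gt0 eps_gt0 design design'.
split=> [equiv | eq_k]; last first.
  move=> P P_prob x t.
  by rewrite (bd_est_law design) ?(bd_est_law design') // eq_k.
pose x0 : 'I_v := Ordinal (ltnW v_ge2).
have e_gt1 : 1 < expR eps by rewrite expR_gt1.
have v_gt0 : 0 < v%:R :> R by rewrite ltr0n ltnW.
have [/andP[k_gt0 _] _ _ _ _] := design; have [/andP[k'_gt0 _] _ _ _ _] := design'.
have : bd_q_self (expR eps) v%:R k%:R = bd_q_self (expR eps) v%:R k'%:R.
  apply: (eq_binomial_image_prob n_gt0 _ _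
    (bd_rescaled_count_incr design v_ge2 eps_gt0 n_gt0)
    (bd_rescaled_count_incr design' v_ge2 eps_gt0 n_gt0)) => [||t].
  - by rewrite bd_q_self_gt0 // ltr0n.
  - by rewrite bd_q_self_gt0 // ltr0n.
  have := equiv _ (is_prob_vec_dirac R x0) x0 t.
  by rewrite (bd_est_law_dirac design) ?(bd_est_law_dirac design').
move/(bd_q_self_inj e_gt1 v_gt0); rewrite !posrE !ltr0n => /(_ k_gt0 k'_gt0) /eqP.
by rewrite eqr_nat => /eqP.
Qed.
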